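(* Let $T_0<T_f<T_i$. Let $\xi=\xi_{T_0}$ be the coefficient of the Neumann solution of problem (P1) with datum $T_0$. Then $$\operatorname{erf}\Big(\xi\sqrt{\tfrac{\alpha_\ell}{\alpha_s}}\Big)<\frac{k_s}{k_\ell}\sqrt{\frac{\alpha_\ell}{\alpha_s}}\;\frac{T_f-T_0}{T_i-T_f}.$$
   Context: Physical constants: density $\rho>0$, specific heats $c_s,c_\ell>0$, thermal conductivities $k_s,k_\ell>0$, latent heat $\ell>0$. Diffusivities are $\alpha_s=k_s/(\rho c_s)$ and $\alpha_\ell=k_\ell/(\rho c_\ell)$, and $b=\alpha_\ell/\alpha_s$. The error functions are $\operatorname{erf}(x)=\frac2{\sqrt\pi}\int_0^xe^{-u^2}du$ and $\operatorname{erfc}=1-\operatorname{erf}$. Set $F_1(x)=e^{-x^2}/\operatorname{erfc}(x)$ and $F_2(x)=e^{-x^2}/\operatorname{erf}(x)$. Problem (P1): find $s(t)$ and temperatures $T_s$ (on $0<x<s(t)$) and $T_\ell$ (on $x>s(t)$) such that: - $\rho c_sT_{s,t}=k_sT_{s,xx}$ and $\rho c_\ell T_{\ell,t}=k_\ell T_{\ell,xx}$; - $s(0)=0$; - $T_\ell(x,0)=T_\ell(+\infty,t)=T_i>T_f$; - $T_s(s(t),t)=T_\ell(s(t),t)=T_f$; - $k_sT_{s,x}(s(t),t)-k_\ell T_{\ell,x}(s(t),t)=\rho\ell\dot s(t)$; - $T_s(0,t)=T_0<T_f$. Its Neumann solution has free boundary $s(t)=2\xi\sqrt{\alpha_\ell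 t}$. Here $\xi>0$ is the unique positive solution of $G(x)=x$, where $G(x)=b_4F_2(\sqrt bx)-b_3F_1(x)$, $b_3=\frac{c_\ell(T_i-T_f)}{\ell\sqrt\pi}$ and $b_4=\frac{k_s(T_f-T_0)}{\rho\ell\sqrt{\pi\alpha_s\alpha_\ell}}$. *)

From Stdlib Require Import Reals Lra.
Open Scope R_scope.

Definition gauss (u : R) : R := exp (- u ^ 2).

Lemma gauss_continuity : continuity gauss.
Proof.
  unfold gauss. apply continuity_comp with (f1 := fun u => - u ^ 2).
  - apply continuity_opp. apply derivable_continuous. apply derivable_pow.
  - exact (derivable_continuous exp derivable_exp).
Qed.

Lemma gauss_integrable (a b : R) : Riemann_integrable gauss a b.
Proof.
  destruct (Rle_dec a b) as [H|H].
  - apply continuity_implies_RiemannInt; [exact H|]. intros; apply gauss_continuity.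
  - apply RiemannInt_P1. apply continuity_implies_RiemannInt; [lra|].
    intros; apply gauss_continuity.
Qed.

Definition erf (x : R) : R := 2 / sqrt PI * RiemannInt (gauss_integrable 0 x).
Definition erfc (x : R) : R := 1 - erf x.

Definition F1 (x : R) : R := exp (- x ^ 2) / erfc x.
Definition F2 (x : R) : R := exp (- x ^ 2) / erf x.

Definition alpha_s (rho c_s k_s : R) : R := k_s / (rho * c_s).
Definition alpha_l (rho c_l k_l : R) : R := k_l / (rho * c_l).

Definition Gfun (rho c_s c_l k_s k_l l T0 Tf Ti : R) (x : R) : R :=
  let a_s := alpha_s rho c_s k_s in
  let a_l := alpha_l rho c_l k_l in
  let b := a_l / a_s in
  let b3 := c_l * (Ti - Tf) / (l * sqrt PI) in
  let b4 := k_s * (Tf - T0) / (rho * l * sqrt (PI * a_s * a_l)) in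
  b4 * F2 (sqrt b * x) - b3 * F1 x.

(* Let [gauss_int x = int_0^x exp(-u^2) du].  Its limit sqrt(pi)/2 gives erf < 1, and shifting the
   tail integral gives [sqrt(pi)/2 - gauss_int x <= exp(-x^2) sqrt(pi)/2], i.e. erfc x <= exp(-x^2)
   and F1 x >= 1 for x >= 0.  Since [erf y * F2 y = exp(-y^2) <= 1], the equation G(xi) = xi > 0
   forces b3 <= b3 F1(xi) < b4 F2(sqrt b xi) <= b4 / erf(sqrt b xi), and b4 / b3 is exactly the
   right-hand side of the claim. *)

From Stdlib Require Import Reals Lra.
From Coquelicot Require Import Coquelicot.

Lemma exp_le_compat x y : x <= y -> exp x <= exp y.
Proof. intros [Hlt| ->]; [left; apply exp_increasing|right]; auto. Qed.

Lemma gauss_pos u : 0 < gauss u.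
Proof. apply exp_pos. Qed.

Lemma gauss_le_1 u : gauss u <= 1.
Proof. unfold gauss; rewrite <- exp_0; apply exp_le_compat; nra. Qed.

Lemma gauss_add_le s t : 0 <= s -> 0 <= t -> gauss (s + t) <= gauss s * gauss t.
Proof. intros; unfold gauss; rewrite <- exp_plus; apply exp_le_compat; nra. Qed.

Lemma continuous_gauss x : continuous gauss x.
Proof. apply continuity_pt_filterlim, gauss_continuity. Qed.

Lemma ex_RInt_gauss a b : ex_RInt gauss a b.
Proof. apply (ex_RInt_continuous (V := R_CompleteNormedModule)); intros; apply continuous_gauss. Qed.

Definition gauss_int (x : R) : R := RInt gauss 0 x.

Lemma erfE x : erf x = 2 / sqrt PI * gauss_int x.
Proof. unfold erf, gauss_int; rewrite (RInt_Reals _ _ _ (gauss_integrable 0 x)); reflexivity. Qed.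

Lemma gauss_int0 : gauss_int 0 = 0.
Proof. apply (RInt_point (V := R_CompleteNormedModule)). Qed.

Lemma gauss_intB a b : gauss_int b - gauss_int a = RInt gauss a b.
Proof.
  unfold gauss_int; rewrite <- (RInt_Chasles gauss 0 a b) by apply ex_RInt_gauss.
  unfold plus; simpl; ring.
Qed.

Lemma is_derive_gauss_int x : is_derive gauss_int x (gauss x).
Proof.
  apply (is_derive_RInt (V := R_NormedModule) _ _ 0).
  - apply filter_forall; intros; apply (RInt_correct (V := R_CompleteNormedModule)), ex_RInt_gauss.
  - apply continuous_gauss.
Qed.

Lemma gauss_int_lt a b : a < b -> gauss_int a < gauss_int b.
Proof.
  intros Hab; assert (0 < RInt gauss a b); [|rewrite <- gauss_intB in *; lra].
  apply RInt_gt_0; auto; intros; [apply gauss_pos|apply continuous_gauss].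
Qed.

Lemma gauss_int_le a b : a <= b -> gauss_int a <= gauss_int b.
Proof. intros [Hab| ->]; [left; apply gauss_int_lt|right]; auto. Qed.

Lemma gauss_int_pos x : 0 < x -> 0 < gauss_int x.
Proof. intros; rewrite <- gauss_int0; apply gauss_int_lt; auto. Qed.

(* Shift the integral over [x, y] to [0, y - x] and split off the factor [gauss x]. *)
Lemma gauss_int_tail x y : 0 <= x -> x <= y ->
  gauss_int y - gauss_int x <= gauss x * gauss_int (y - x).
Proof.
  intros Hx Hxy; rewrite gauss_intB.
  assert (Hshift := RInt_comp_lin (V := R_CompleteNormedModule) gauss 1 x 0 (y - x)
                      (ex_RInt_gauss _ _)).
  replace (1 * 0 + x) with x in Hshift by ring.
  replace (1 * (y - x) + x) with y in Hshift by ring.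
  rewrite <- Hshift, (RInt_ext _ (fun t => gauss (t + x)))
    by (intros; unfold scal; simpl; unfold mult; simpl; rewrite !Rmult_1_l; reflexivity).
  unfold gauss_int.
  change (gauss x * RInt gauss 0 (y - x)) with (scal (gauss x) (RInt gauss 0 (y - x))).
  rewrite <- (RInt_scal (V := R_CompleteNormedModule)) by apply ex_RInt_gauss.
  apply RInt_le; [lra| | |].
  - apply (ex_RInt_continuous (V := R_CompleteNormedModule)); intros t _.
    apply (continuous_comp (fun t => t + x) gauss); [|apply continuous_gauss].
    apply (continuous_plus (fun t => t) (fun _ => x));
      [apply continuous_id|apply continuous_const].
  - apply (ex_RInt_continuous (V := R_CompleteNormedModule)); intros.
    apply (continuous_scal_r (gauss x) gauss), continuous_gauss.
  - intros t Ht; rewrite Rplus_comm; apply gauss_add_le; lra.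
Qed.

Set Warnings "-notation-overridden,-ambiguous-paths,-notation-incompatible-prefix".
From mathcomp Require all_boot all_order all_algebra all_classical all_reals all_analysis.
From mathcomp Require Rstruct Rstruct_topology.

Module GaussianIntegral.
Import all_boot all_order all_algebra all_classical all_reals all_analysis.
Import Rstruct Rstruct_topology.
Import Order.TTheory GRing.Theory Num.Theory numFieldNormedType.Exports.
Local Open Scope classical_set_scope.
Local Open Scope ring_scope.

Lemma derivable_pt_lim_is_derive (f : R^o -> R^o) (x l : R^o) :
  derivable_pt_lim f x l -> is_derive x 1 f l.
Proof.
move=> fl; have cvg_quot : (fun h : R^o => h^-1 *: ((f \o shift x) (h *: 1) - f x))
    @ (0 : R^o)^' --> l.
  apply/cvgrPdist_lt => e /RltP e0; have [d fd] := fl e e0.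
  apply/nbhs_ballP; exists (pos d); first by apply/RltP; apply: cond_pos.
  move=> h /=; rewrite /ball /= sub0r normrN -RabsE => /RltP hd h0.
  have hn0 : h <> 0%coqR by move=> h0'; move: h0; rewrite h0' eqxx.
  have /RltP := fd h hn0 hd.
  rewrite RabsE distrC; congr (`|_ - _| < _).
  rewrite RdivE /GRing.scale /= mulrC; congr (_ * _); congr (f _ - _).
  by rewrite addrC /GRing.scale /= mulr1.
by split; [apply/cvg_ex; exists l | exact: cvg_lim].
Qed.

Lemma RatanE (y : R) : Ratan.atan y = atan y.
Proof.
pose d := fun z : R^o => (Ratan.atan z - atan z : R^o).
suff : d y = d 0 by rewrite /d Ratan.atan_0 atan0 subrr => /eqP; rewrite subr_eq0 => /eqP.
apply: is_derive_0_is_cst => z.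
have := is_deriveB (derivable_pt_lim_is_derive _ _ _ (Ratan.derivable_pt_lim_atan z))
  (is_derive1_atan z).
by rewrite RinvE RplusE RpowE subrr.
Qed.

Lemma RPIE : PI = pi.
Proof.
have PI4 : (PI / 4)%coqR = pi / 4%:R by rewrite -atan1 -RatanE Ratan.atan_1.
have -> : PI = (4 * (PI / 4))%coqR by field.
rewrite PI4 RmultE.
have -> : (4%coqR : R) = 4%:R by rewrite -INRE; simpl; lra.
by rewrite mulrC divfK // pnatr_eq0.
Qed.

Lemma integral0_gaussE (x : R) : 0 < x ->
  gauss_integral_proof.integral0_gauss x = gauss_int x.
Proof.
have gauss_int_derive y : is_derive (y : R^o) 1 (gauss_int : R^o -> R^o) (gauss y).
  exact/derivable_pt_lim_is_derive/is_derive_Reals/is_derive_gauss_int.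
move=> x0; rewrite /gauss_integral_proof.integral0_gauss /Rintegral.
rewrite (@continuous_FTC2 R gauss_fun (gauss_int : R -> R^o) 0 x x0).
- by rewrite gauss_int0 -EFinB subr0.
- exact/continuous_subspaceT/continuous_gauss_fun.
- split.
  + by move=> y _; case: (gauss_int_derive y).
  + by apply/cvg_at_right_filter/differentiable_continuous/derivable1_diffP;
      case: (gauss_int_derive 0).
  + by apply/cvg_at_left_filter/differentiable_continuous/derivable1_diffP;
      case: (gauss_int_derive x).
- move=> y _; rewrite derive1E (@derive_val _ _ _ _ _ _ _ (gauss_int_derive y)).
  by rewrite /gauss /gauss_fun RexpE RoppE RpowE.
Qed.

Lemma cvgy_gauss_int : gauss_int x @[x --> +oo] --> Num.sqrt pi / 2.
Proof.
have -> : Num.sqrt pi / 2 = Num.sqrt (pi / 4) :> R.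
  rewrite sqrtrM ?pi_ge0 // sqrtrV // (_ : 4 = 2 ^+ 2) ?sqrtr_sqr ?ger0_norm //.
  by rewrite expr2 -natrM.
have sqrt_cvg : Num.sqrt (gauss_integral_proof.integral0_gauss x ^+ 2) @[x --> +oo]
    --> (Num.sqrt (pi / 4) : R).
  apply: continuous_cvg; first exact: sqrt_continuous.
  exact: gauss_integral_proof.cvg_integral0_gauss_sqr.
apply: cvg_trans sqrt_cvg; apply: near_eq_cvg; near=> x.
have x0 : 0 < x by near: x; exact: nbhs_pinfty_gt.
rewrite /= integral0_gaussE // sqrtr_sqr ger0_norm //.
exact/RleP/Rlt_le/gauss_int_pos/RltP.
Unshelve. all: end_near. Qed.

Lemma gauss_int_near_limit (e : R) : (0 < e)%coqR ->
  exists M : R, forall y : R, (M < y)%coqR -> (Rabs (gauss_int y - sqrt PI / 2) < e)%coqR.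
Proof.
move=> /RltP e0; have := cvgy_gauss_int; move/(@cvgrPdist_lt _ R^o) => /(_ _ e0) [M [_ HM]].
exists M => y /RltP My; apply/RltP.
by rewrite RabsE distrC RsqrtE RPIE RdivE; apply: HM.
Qed.
End GaussianIntegral.

Lemma is_lim_gauss_int : is_lim gauss_int p_infty (sqrt PI / 2).
Proof. apply is_lim_spec; intros eps; apply GaussianIntegral.gauss_int_near_limit, cond_pos. Qed.

Lemma gauss_int_le_limit x : gauss_int x <= sqrt PI / 2.
Proof.
  change (Rbar_le (gauss_int x) (sqrt PI / 2)).
  apply (is_lim_le_loc (fun _ => gauss_int x) gauss_int p_infty);
    [|apply is_lim_const|apply is_lim_gauss_int].
  exists x; intros y Hy; apply gauss_int_le; lra.
Qed.

Lemma gauss_int_lt_limit x : gauss_int x < sqrt PI / 2.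
Proof.
  apply Rlt_le_trans with (gauss_int (x + 1));
    [apply gauss_int_lt; lra|apply gauss_int_le_limit].
Qed.

Lemma limit_sub_gauss_int x : 0 <= x ->
  sqrt PI / 2 - gauss_int x <= gauss x * (sqrt PI / 2).
Proof.
  intros Hx.
  assert (Rbar_le (sqrt PI / 2) (gauss_int x + gauss x * (sqrt PI / 2))); [|simpl in *; lra].
  apply (is_lim_le_loc gauss_int (fun _ => gauss_int x + gauss x * (sqrt PI / 2)) p_infty);
    [|apply is_lim_gauss_int|apply is_lim_const].
  exists x; intros y Hy.
  assert (Htail := gauss_int_tail x y Hx (Rlt_le _ _ Hy)).
  assert (Hle := gauss_int_le_limit (y - x)).
  assert (Hg := gauss_pos x).
  nra.
Qed.

Lemma erf_pos x : 0 < x -> 0 < erf x.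
Proof.
  intros Hx; rewrite erfE; assert (Hpi := sqrt_lt_R0 PI PI_RGT_0).
  apply Rmult_lt_0_compat; [apply Rdiv_lt_0_compat; lra|apply gauss_int_pos; auto].
Qed.

Lemma erfc_pos x : 0 < erfc x.
Proof.
  unfold erfc; rewrite erfE; assert (Hpi := sqrt_lt_R0 PI PI_RGT_0).
  assert (Hlt := gauss_int_lt_limit x).
  replace (1 - 2 / sqrt PI * gauss_int x) with (2 / sqrt PI * (sqrt PI / 2 - gauss_int x))
    by (field; lra).
  apply Rmult_lt_0_compat; [apply Rdiv_lt_0_compat|]; lra.
Qed.

Lemma erfc_le_gauss x : 0 <= x -> erfc x <= gauss x.
Proof.
  intros Hx; unfold erfc; rewrite erfE; assert (Hpi := sqrt_lt_R0 PI PI_RGT_0).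
  assert (Hgap := limit_sub_gauss_int x Hx).
  replace (1 - 2 / sqrt PI * gauss_int x) with (2 / sqrt PI * (sqrt PI / 2 - gauss_int x))
    by (field; lra).
  replace (gauss x) with (2 / sqrt PI * (gauss x * (sqrt PI / 2))) by (field; lra).
  apply Rmult_le_compat_l; [left; apply Rdiv_lt_0_compat|]; lra.
Qed.

Lemma F1_ge_1 x : 0 <= x -> 1 <= F1 x.
Proof.
  intros Hx; assert (Hc := erfc_pos x); assert (Hle := erfc_le_gauss x Hx).
  unfold F1; apply (Rmult_le_reg_r (erfc x)); auto.
  unfold Rdiv; rewrite Rmult_assoc, Rinv_l, Rmult_1_l, Rmult_1_r by lra.
  exact Hle.
Qed.

Lemma F2_mul_erf x : 0 < x -> F2 x * erf x = gauss x.
Proof. intros Hx; assert (Hpos := erf_pos x Hx); unfold F2, gauss; field; lra. Qed.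

Lemma erf_lt_coeff_ratio b3 b4 x y : 0 < b3 -> 0 <= x -> 0 < y ->
  0 < b4 * F2 y - b3 * F1 x -> erf y < b4 / b3.
Proof.
  intros Hb3 Hx Hy HG.
  assert (HF1 := F1_ge_1 x Hx); assert (Herf := erf_pos y Hy).
  assert (HF2 := F2_mul_erf y Hy); assert (Hg := gauss_le_1 y).
  assert (HF2pos : 0 < F2 y) by (unfold F2; apply Rdiv_lt_0_compat; auto; apply exp_pos).
  apply (Rmult_lt_reg_r b3); auto; unfold Rdiv; rewrite Rmult_assoc, Rinv_l, Rmult_1_r by lra.
  nra.
Qed.

Lemma coeff_ratio rho c_l k_s k_l l T0 Tf Ti a_s a_l :
  0 < rho -> 0 < c_l -> 0 < l -> Tf < Ti -> 0 < a_s -> 0 < a_l -> k_l = a_l * (rho * c_l) ->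
  (k_s * (Tf - T0) / (rho * l * sqrt (PI * a_s * a_l))) / (c_l * (Ti - Tf) / (l * sqrt PI))
  = k_s / k_l * sqrt (a_l / a_s) * ((Tf - T0) / (Ti - Tf)).
Proof.
  intros Hrho Hcl Hl Hfi Has Hal ->.
  assert (Hpi := PI_RGT_0).
  rewrite (sqrt_mult (PI * a_s) a_l), (sqrt_mult PI a_s), sqrt_div by nra.
  assert (Hqs := sqrt_lt_R0 a_s Has); assert (Hql := sqrt_lt_R0 a_l Hal).
  assert (Hsp := sqrt_lt_R0 PI Hpi).
  replace (a_l * (rho * c_l)) with (sqrt a_l * sqrt a_l * (rho * c_l))
    by (rewrite sqrt_sqrt; lra).
  field; repeat split; lra.
Qed.

Theorem corollary5 (rho c_s c_l k_s k_l l T0 Tf Ti xi : R)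
  (Hrho : 0 < rho) (Hcs : 0 < c_s) (Hcl : 0 < c_l)
  (Hks : 0 < k_s) (Hkl : 0 < k_l) (Hl : 0 < l)
  (H0f : T0 < Tf) (Hfi : Tf < Ti)
  (Hxi : 0 < xi) (HG : Gfun rho c_s c_l k_s k_l l T0 Tf Ti xi = xi) :
  erf (xi * sqrt (alpha_l rho c_l k_l / alpha_s rho c_s k_s))
  < k_s / k_l * sqrt (alpha_l rho c_l k_l / alpha_s rho c_s k_s)
      * ((Tf - T0) / (Ti - Tf)).
Proof.
  assert (Has : 0 < alpha_s rho c_s k_s) by (apply Rdiv_lt_0_compat; nra).
  assert (Hal : 0 < alpha_l rho c_l k_l) by (apply Rdiv_lt_0_compat; nra).
  rewrite <- (coeff_ratio rho c_l k_s k_l l T0 Tf Ti) by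
    (auto; unfold alpha_l; field; lra).
  apply erf_lt_coeff_ratio with xi; [| lra | |].
  - apply Rdiv_lt_0_compat; [nra|apply Rmult_lt_0_compat; auto; apply sqrt_lt_R0, PI_RGT_0].
  - apply Rmult_lt_0_compat; auto; apply sqrt_lt_R0, Rdiv_lt_0_compat; auto.
  - unfold Gfun in HG; cbv zeta in HG; rewrite (Rmult_comm xi); lra.
Qed.
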